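(* Let $\tau = \frac{1+\sqrt{5}}{2}$. Then the infinite product $\prod_{n=1}^{\infty} \left(1 - \frac{1}{\tau^n}\right)^{\frac{\mu(n) - \varphi(n)}{n}}$ converges and $$e = \prod_{n=1}^{\infty} \left(1 - \frac{1}{\tau^n}\right)^{\frac{\mu(n) - \varphi(n)}{n}}.$$
   Context: $\tau=\frac{1+\sqrt5}{2}$ is the golden ratio. $\varphi(n)$ is Euler's totient function (the number of integers $1\le k\le n$ with $\gcd(k,n)=1$). $\mu(n)$ is the Möbius function: $\mu(1)=1$, $\mu(n)=0$ if $n$ is not squarefree, and $\mu(n)=(-1)^r$ if $n$ is squarefree with $r$ distinct prime factors. $e$ is the base of the natural logarithm. *)

From mathcomp Require Import all_boot.
From Stdlib Require Import Reals.

Definition euler_phi (n : nat) : nat := totient n.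

(* Möbius function: mu 1 = 1, mu n = 0 if n not squarefree,
   mu n = (-1)^r if n squarefree with r distinct prime factors. *)
Definition moebius (n : nat) : Z :=
  if all (fun p => logn p n == 1) (primes n)
  then (if odd (size (primes n)) then (-1)%Z else 1%Z)
  else 0%Z.

Fixpoint partial_prod (f : nat -> R) (N : nat) : R :=
  match N with
  | O => 1%R
  | S k => (partial_prod f k * f (S k))%R
  end.

Definition tau : R := ((1 + sqrt 5) / 2)%R.

From Stdlib Require Import Reals Lra Lia.
From Coquelicot Require Import Coquelicot.
From mathcomp Require Import all_boot all_order all_algebra.
From mathcomp Require Import Rstruct zify.
From mathcomp Require cyclic.
Import Order.TTheory GRing.Theory Num.Theory.

(* Put x = 1/tau and a(n) = (mu(n) - phi(n)) / n.  The logarithm of the N-th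
   partial product is  L(N) = sum_{n <= N} a(n) ln (1 - x^n).  Expanding
   ln (1 - y) = - sum_k y^k / k  and grouping the terms x^(nk) according to
   m = nk, the coefficient of x^m / m is  - sum_{d | m} (mu(d) - phi(d)),  which
   equals m - [m = 1] by the two divisor-sum identities  sum_{d|m} mu(d) = [m = 1]
   and  sum_{d|m} phi(d) = m.  Hence formally  L = sum_{m >= 2} x^m = x^2/(1-x),
   and 1 - x = x^2 makes this 1.

   To avoid rearranging infinite double series, everything is truncated at N:
   each logarithm is expanded to order N with an explicit remainder, and the
   terms with n k > N are bounded directly, giving
   |L(N) - x^2/(1-x)| <= C N^2 x^N  for every 0 < x < 1. *)

Section AnalyticFacts.
Local Open Scope R_scope.

Fixpoint log_poly (K : nat) (t : R) : R :=
  match K with O => 0 | S K' => log_poly K' t + t ^ S K' / INR (S K') end.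

Fixpoint geom_poly (K : nat) (t : R) : R :=
  match K with O => 0 | S K' => geom_poly K' t + t ^ K' end.

Lemma is_derive_log_poly K t : is_derive (log_poly K) t (geom_poly K t).
Proof.
elim: K => [|K IH] /=; first by auto_derive.
apply: (is_derive_plus (log_poly K) (fun t => t ^ S K / INR (S K))) => //.
auto_derive => //.
change (match K with 0%nat => 1 | S _ => INR K + 1 end) with (INR (S K)).
by field; apply: not_0_INR.
Qed.

Lemma geom_poly_closed K t : (1 - t) * geom_poly K t = 1 - t ^ K.
Proof. by elim: K => [|K IH] /=; [ring | rewrite Rmult_plus_distr_l IH; ring]. Qed.

Lemma log_poly_0 K : log_poly K 0 = 0.
Proof. by elim: K => [|K IH] //=; rewrite IH /Rdiv Rmult_0_l Rmult_0_l Rplus_0_r. Qed.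

(* Remainder of the Taylor expansion of ln (1 - y) at order K, by the mean value
   theorem applied to  ln (1 - t) + log_poly K t,  whose derivative is
   - t^K / (1 - t). *)
Lemma ln_taylor_bound K y : 0 <= y < 1 ->
  Rabs (ln (1 - y) + log_poly K y) <= y ^ S K / (1 - y).
Proof.
move=> [y0 y1].
set g := fun t => ln (1 - t) + log_poly K t.
set dg := fun t => - (t ^ K / (1 - t)).
have g_deriv t : t < 1 -> is_derive g t (dg t).
  move=> t1; have -> : dg t = - / (1 - t) + geom_poly K t.
    rewrite /dg; apply: (Rmult_eq_reg_l (1 - t)); last by lra.
    rewrite Rmult_plus_distr_l geom_poly_closed; field; lra.
  apply: (is_derive_plus (fun t => ln (1 - t)) (log_poly K)); last exact: is_derive_log_poly.
  by auto_derive; [lra | field; lra].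
have [c [[c0 cy] E]] : exists c, 0 <= c <= y /\ g y - g 0 = dg c * (y - 0).
  have := MVT_gen g 0 y dg; rewrite /= Rmin_left ?Rmax_right; try lra.
  apply=> t ?; first by apply: g_deriv; lra.
  apply: derivable_continuous_pt; exists (dg t).
    by apply/is_derive_Reals/g_deriv; lra.
have g0 : g 0 = 0 by rewrite /g log_poly_0 Rminus_0_r ln_1; ring.
rewrite -/(g y) -(Rminus_0_r (g y)) -g0 E /dg Rminus_0_r.
rewrite Rabs_mult Rabs_Ropp !Rabs_pos_eq; first last; try lra.
  by apply: Rmult_le_pos; [apply: pow_le | apply/Rlt_le/Rinv_0_lt_compat]; lra.
have -> : y ^ S K / (1 - y) = y ^ K / (1 - y) * y by rewrite /=; field; lra.
apply: Rmult_le_compat_r => //; apply: Rmult_le_compat.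
- exact: pow_le.
- by apply/Rlt_le/Rinv_0_lt_compat; lra.
- exact: pow_incr.
- by apply: Rinv_le_contravar; lra.
Qed.

(* Polynomial factors do not prevent geometric decay:  n^2 x^n -> 0  for
   0 < x < 1, since the ratio of consecutive terms tends to x (d'Alembert). *)
Lemma sq_geom_cv x : 0 < x < 1 -> Un_cv (fun n => INR n ^ 2 * x ^ n) 0.
Proof.
move=> [x0 x1]; apply/is_lim_seq_Reals/is_lim_seq_incr_1.
set b := fun n => INR n.+1 ^ 2 * x ^ n.+1.
have b_pos n : 0 < b n.
  by apply: Rmult_lt_0_compat; [apply: pow_lt; apply: lt_0_INR; lia | exact: pow_lt].
have ratio_cv : is_lim_seq (fun n => Rabs (b n.+1 / b n)) x.
  have inv_cv : is_lim_seq (fun n => / INR n.+1) 0.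
    have := is_lim_seq_inv (fun n => INR n.+1) p_infty; apply=> //.
    exact/(is_lim_seq_incr_1 INR)/is_lim_seq_INR.
  have := is_lim_seq_mult' _ _ _ _
    (is_lim_seq_mult' _ _ _ _ (is_lim_seq_plus' _ _ _ _ (is_lim_seq_const 1) inv_cv)
                              (is_lim_seq_plus' _ _ _ _ (is_lim_seq_const 1) inv_cv))
    (is_lim_seq_const x).
  rewrite Rplus_0_r !Rmult_1_l; apply: is_lim_seq_ext => n.
  have n0 := pos_INR n; have xn := pow_lt x n x0.
  rewrite Rabs_pos_eq; last by apply/Rlt_le/Rdiv_lt_0_compat.
  rewrite /b -!tech_pow_Rmult !S_INR; field; lra.
have /ex_series_lim_0 := ex_series_DAlembert b x x1 (fun n => Rgt_not_eq _ _ (b_pos n)) ratio_cv.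
by apply: is_lim_seq_ext => n; rewrite Rabs_pos_eq //; apply/Rlt_le.
Qed.

Lemma Un_cv_dominated (u v : nat -> R) (l C : R) :
  Un_cv v 0 -> (forall N, (0 < N)%nat -> Rabs (u N - l) <= C * v N) -> Un_cv u l.
Proof.
move=> /is_lim_seq_Reals/(is_lim_seq_scal_l _ C) /= cv bound eps eps0.
have [N0 HN0] := proj1 (is_lim_seq_Reals _ _) cv eps eps0.
exists (max N0 1) => N HN; apply: Rle_lt_trans (bound N _) _; first lia.
have := HN0 N ltac:(lia); rewrite /R_dist Rmult_0_r Rminus_0_r.
exact: Rle_lt_trans (Rle_abs _).
Qed.

Lemma golden_ratio_inverse : (0 < / tau < 1) /\ (/ tau) ^ 2 / (1 - / tau) = 1.
Proof.
have s5 : sqrt 5 * sqrt 5 = 5 by apply: sqrt_sqrt; lra.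
have s2 : 2 < sqrt 5 by have := sqrt_pos 5; nra.
have t1 : 1 < tau by rewrite /tau; lra.
have tt : tau * tau = tau + 1 by rewrite /tau; nra.
have x1 : / tau < 1 by rewrite -Rinv_1; apply: Rinv_lt_contravar; lra.
split; first by split => //; apply: Rinv_0_lt_compat; lra.
have -> : 1 - / tau = (/ tau) ^ 2.
  apply: (Rmult_eq_reg_l (tau * tau)); last by nra.
  rewrite Rmult_minus_distr_l Rmult_1_r.
  have -> : tau * tau * / tau = tau by field; lra.
  have -> : tau * tau * (/ tau) ^ 2 = 1 by field; lra.
  lra.
by field; lra.
Qed.
End AnalyticFacts.

Section Arithmetic.
Local Open Scope ring_scope.
Variable V : nmodType.

Lemma big_divisors_filter (F : nat -> V) (s : seq nat) (m : nat) : (0 < m)%N ->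
  uniq s -> {subset divisors m <= s} ->
  \sum_(d <- s | (d %| m)%N) F d = \sum_(d <- divisors m) F d.
Proof.
move=> m0 us sub; rewrite -big_filter; apply/perm_big/uniq_perm.
- exact: filter_uniq.
- exact: divisors_uniq.
move=> d; rewrite mem_filter -dvdn_divisors //.
by apply/andP/idP => [[] //| dm]; split=> //; apply/sub; rewrite -dvdn_divisors.
Qed.

Lemma big_products_le (G : nat -> nat -> V) (N : nat) :
  \sum_(1 <= n < N.+1) \sum_(1 <= k < N.+1 | (n * k <= N)%N) G n k =
  \sum_(1 <= m < N.+1) \sum_(d <- divisors m) G d (m %/ d)%N.
Proof.
have multiples n : (0 < n)%N ->
    \sum_(1 <= k < N.+1 | (n * k <= N)%N) G n k =
    \sum_(1 <= m < N.+1 | (n %| m)%N) G n (m %/ n)%N.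
  move=> n0; rewrite -big_filter -[RHS]big_filter.
  rewrite (eq_bigr (fun k => G n (n * k %/ n)%N)) => [|k _]; last by rewrite mulKn.
  rewrite -(big_map (muln n) xpredT (fun m => G n (m %/ n)%N)).
  apply/perm_big/uniq_perm.
  - rewrite map_inj_uniq ?filter_uniq ?iota_uniq //.
    by move=> a b /eqP; rewrite eqn_pmul2l // => /eqP.
  - exact/filter_uniq/iota_uniq.
  move=> m; rewrite mem_filter mem_iota; apply/mapP/idP.
    case=> k; rewrite mem_filter mem_iota => /andP[nkN /andP[k1 kN]] ->.
    by rewrite dvdn_mulr //=; apply/andP; split; [rewrite muln_gt0 n0 | lia].
  move=> /and3P[nm m1 mN]; exists (m %/ n)%N; last by rewrite mulnC divnK.
  have q0 : (0 < m %/ n)%N by rewrite divn_gt0 // dvdn_leq.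
  by rewrite mem_filter mem_iota mulnC divnK //; have := leq_div m n; lia.
under eq_big_nat => n /andP[n1 _] do rewrite multiples // big_mkcond.
rewrite exchange_big_nat; apply: eq_big_nat => m /andP[m0 mN].
rewrite -big_mkcond big_divisors_filter ?iota_uniq // => d.
rewrite -dvdn_divisors // => dm; rewrite mem_iota.
by have := dvdn_gt0 m0 dm; have := dvdn_leq m0 dm; lia.
Qed.

Lemma big_divisors_pmul_dvd (F : nat -> V) p m : prime p -> (0 < m)%N ->
  \sum_(d <- divisors (p * m) | (p %| d)%N) F d = \sum_(e <- divisors m) F (p * e)%N.
Proof.
move=> pp m0; have p0 := prime_gt0 pp; have pm0 : (0 < p * m)%N by rewrite muln_gt0 p0.
rewrite -big_filter -(big_map (muln p) xpredT); apply/perm_big/uniq_perm.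
- exact/filter_uniq/divisors_uniq.
- rewrite map_inj_uniq ?divisors_uniq //.
  by move=> a b /eqP; rewrite eqn_pmul2l // => /eqP.
move=> d; rewrite mem_filter -dvdn_divisors //; apply/idP/mapP.
  case/andP=> /dvdnP[e ->] dm; exists e; last exact: mulnC.
  by rewrite -dvdn_divisors // -(dvdn_pmul2l p0) mulnC.
by case=> e; rewrite -dvdn_divisors // => em ->; rewrite dvdn_mulr // dvdn_pmul2l.
Qed.

Lemma big_divisors_pmul_coprime (F : nat -> V) p m : prime p -> (0 < m)%N ->
  \sum_(d <- divisors (p * m) | ~~ (p %| d)%N) F d =
  \sum_(d <- divisors m | ~~ (p %| d)%N) F d.
Proof.
move=> pp m0; have pm0 : (0 < p * m)%N by rewrite muln_gt0 prime_gt0.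
rewrite -big_filter -[RHS]big_filter; apply/perm_big/uniq_perm.
- exact/filter_uniq/divisors_uniq.
- exact/filter_uniq/divisors_uniq.
move=> d; rewrite !mem_filter -!dvdn_divisors //; case pd: (p %| d)%N => //=.
apply/idP/idP => [| /dvdn_mull //].
by rewrite Gauss_dvdr // coprime_sym prime_coprime // pd.
Qed.
End Arithmetic.

Section Moebius.
Local Open Scope nat_scope.

Lemma moebius_mul_prime p e : prime p -> ~~ (p %| e) -> 0 < e ->
  moebius (p * e) = Z.opp (moebius e).
Proof.
move=> pp npe e0; have p0 := prime_gt0 pp.
have pe : perm_eq (primes (p * e)) (p :: primes e).
  apply: uniq_perm; first exact: primes_uniq.
    by rewrite /= primes_uniq andbT mem_primes !negb_and npe !orbT.
  by move=> q; rewrite in_cons primesM // primes_prime // in_cons in_nil orbF.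
rewrite /moebius (perm_size pe) (perm_all _ pe) /=.
have -> : logn p (p * e) == 1 by rewrite lognM // logn_prime // eqxx logn_coprime // prime_coprime.
have -> : all (fun q => logn q (p * e) == 1) (primes e) = all (fun q => logn q e == 1) (primes e).
  apply: eq_in_all => q; rewrite mem_primes => /and3P[qp _ qe].
  rewrite lognM // logn_prime //.
  by case: (eqVneq q p) => [qpE | //]; rewrite -qpE qe in npe.
by case: (all _ _); case: (odd _).
Qed.

Lemma moebius_sq_dvd p d : prime p -> 0 < d -> p ^ 2 %| d -> moebius d = Z0.
Proof.
move=> pp d0; rewrite pfactor_dvdn // /moebius => le2.
suff /negbTE -> : ~~ all (fun q => logn q d == 1) (primes d) by [].
apply/allPn; exists p; last by case: (logn p d) le2 => [|[]].
by rewrite -logn_gt0; case: (logn p d) le2.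
Qed.
End Moebius.

Section DivisorSums.
Local Open Scope ring_scope.

Lemma sum_moebius m : (0 < m)%N ->
  \sum_(d <- divisors m) IZR (moebius d) = (m == 1)%:R :> R.
Proof.
move=> m0; have [-> | m_ne1] := eqVneq m 1%N.
  by rewrite /divisors /= big_seq1.
have pp : prime (pdiv m) by apply: pdiv_prime; lia.
have [m' m'0 ->] : exists2 m', (0 < m')%N & m = (pdiv m * m')%N.
  exists (m %/ pdiv m)%N; last by rewrite mulnC divnK // pdiv_dvd.
  by rewrite divn_gt0 ?pdiv_gt0 // dvdn_leq // pdiv_dvd.
set p := pdiv _ in pp *; clearbody p.
rewrite (bigID (fun d => (p %| d)%N)) /= big_divisors_pmul_dvd //.
rewrite big_divisors_pmul_coprime // (bigID (fun e => (p %| e)%N)) /=.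
rewrite big1_seq => [|e /andP[pe]]; last first.
  rewrite -dvdn_divisors // => em.
  rewrite (@moebius_sq_dvd p) //; last by rewrite expnSr dvdn_pmul2l ?prime_gt0 // expn1.
  by rewrite muln_gt0 prime_gt0 // (dvdn_gt0 m'0).
rewrite add0r -big_split big1_seq //= => e /andP[npe].
rewrite -dvdn_divisors // => em.
by rewrite moebius_mul_prime ?(dvdn_gt0 m'0) // opp_IZR RoppE addNr.
Qed.

Lemma sum_totient m : (0 < m)%N -> \sum_(d <- divisors m) (totient d)%:R = m%:R :> R.
Proof.
move=> m0; rewrite -{2}(cyclic.sum_totient_dvd m) natr_sum.
rewrite -(big_mkord (fun d => (d %| m)%N) (fun d => (totient d)%:R)).
rewrite big_divisors_filter ?iota_uniq // => d; rewrite -dvdn_divisors // => dm.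
by rewrite mem_iota ltnS /= dvdn_leq.
Qed.

Lemma sum_moebius_sub_totient m : (0 < m)%N ->
  \sum_(d <- divisors m) (IZR (moebius d) - (totient d)%:R) = (m == 1)%:R - m%:R :> R.
Proof. by move=> m0; rewrite sumrB sum_moebius // sum_totient. Qed.
End DivisorSums.

From mathcomp.algebra_tactics Require Import ring lra.

Definition expo (n : nat) : R := (IZR (moebius n) - INR (euler_phi n)) / INR n.

Section Estimate.
Local Open Scope ring_scope.

Lemma expoE n : expo n = (IZR (moebius n) - (totient n)%:R) / n%:R.
Proof. by rewrite /expo RdivE RminusE !INRE. Qed.

Lemma moebius_norm_le1 n : `|IZR (moebius n)| <= 1 :> R.
Proof.
rewrite /moebius; case: ifP => _; last by rewrite normr0.
by case: ifP => _ /=; rewrite ?RoppE ?normrN normr1.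
Qed.

Lemma totient_leq n : (totient n <= n)%N.
Proof.
rewrite totient_count_coprime; apply: (@leq_trans (\sum_(0 <= d < n) 1)%N).
  by apply: leq_sum => d _; exact: leq_b1.
by rewrite sum_nat_const_nat muln1 subn0.
Qed.

(* The exponents are bounded, since  |mu| <= 1  and  phi(n) <= n. *)
Lemma expo_bound n : (0 < n)%N -> `|expo n| <= 2.
Proof.
move=> n0; have hmu := moebius_norm_le1 n.
have hphi : (totient n)%:R <= n%:R :> R by rewrite ler_nat totient_leq.
have hn : 1 <= n%:R :> R by rewrite ler1n.
rewrite expoE normrM normfV normr_nat ler_pdivrMr; last by lra.
by apply: le_trans (ler_normB _ _) _; rewrite normr_nat; lra.
Qed.

Definition log_partial (x : R) (N : nat) :=
  \sum_(1 <= n < N.+1) expo n * ln (1 - x ^+ n).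

Lemma log_poly_sum K t : log_poly K t = \sum_(1 <= k < K.+1) t ^+ k / k%:R.
Proof.
elim: K => [|K IH]; first by rewrite big_geq.
by rewrite big_nat_recr // -IH -RpowE -INRE -RdivE.
Qed.

Lemma norm_sum_le_const (T : numDomainType) (F : nat -> T) (N : nat) (c : T) :
  (forall n, (1 <= n <= N)%N -> `|F n| <= c) ->
  `|\sum_(1 <= n < N.+1) F n| <= N%:R * c.
Proof.
move=> Fc; apply: le_trans (ler_norm_sum _ _ _) _.
have -> : N%:R * c = \sum_(1 <= n < N.+1) c by rewrite sumr_const_nat subn1 mulr_natl.
exact: ler_sum_nat.
Qed.

Section FixedRatio.
Variable x : R.
Hypotheses (x_gt0 : 0 < x) (x_lt1 : x < 1).

Lemma expr_le_expr n m : (n <= m)%N -> x ^+ m <= x ^+ n.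
Proof. by move=> nm; apply: ler_wiXn2l => //; apply: ltW. Qed.

Lemma log_power_taylor n N : (0 < n)%N ->
  `|ln (1 - x ^+ n) + \sum_(1 <= k < N.+1) (x ^+ n) ^+ k / k%:R| <= x ^+ N.+1 / (1 - x).
Proof.
move=> n0.
have y0 : 0 <= x ^+ n by rewrite exprn_ge0 // ltW.
have yx : x ^+ n <= x by rewrite -[leRHS]expr1 expr_le_expr.
have y1 : x ^+ n < 1 by apply: le_lt_trans yx x_lt1.
have := ln_taylor_bound N (x ^+ n) (conj (RleP y0) (RltP y1)).
rewrite RabsE RplusE RminusE RdivE RpowE log_poly_sum => /RleP/le_trans; apply.
apply: ler_pM.
- by rewrite exprn_ge0.
- by rewrite invr_ge0 subr_ge0 ltW.
- by rewrite -exprM expr_le_expr // leq_pmull.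
- by rewrite lef_pV2 ?posrE ?subr_gt0 // lerB.
Qed.

(* Grouping the terms  x^(n k) / (n k)  with  n k = m <= N  by  m,  the identity
   sum_{d | m} (mu - phi)(d) = [m = 1] - m  collapses them to a geometric sum. *)
Lemma diagonal_sum N :
  \sum_(1 <= n < N.+1) \sum_(1 <= k < N.+1 | (n * k <= N)%N) expo n * ((x ^+ n) ^+ k / k%:R)
  = - \sum_(2 <= m < N.+1) x ^+ m.
Proof.
pose c d : R := IZR (moebius d) - (totient d)%:R.
transitivity (\sum_(1 <= n < N.+1) \sum_(1 <= k < N.+1 | (n * k <= N)%N)
               c n * (x ^+ (n * k) / (n * k)%:R)).
  apply: eq_big_nat => n _; apply: eq_bigr => k _.
  by rewrite expoE /c exprM natrM invfM; ring.
rewrite (@big_products_le _ (fun n k => c n * (x ^+ (n * k) / (n * k)%:R))).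
transitivity (\sum_(1 <= m < N.+1) ((m == 1)%:R - m%:R) * (x ^+ m / m%:R)).
  apply: eq_big_nat => m /andP[m0 _].
  rewrite -sum_moebius_sub_totient // mulr_suml; apply: eq_big_seq => d.
  by rewrite -dvdn_divisors // => dm; rewrite mulnC divnK.
case: N => [|N]; first by rewrite !big_geq ?oppr0.
rewrite big_ltn // eqxx subrr mul0r add0r -sumrN.
apply: eq_big_nat => m /andP[m2 _].
have -> : (m == 1)%N = false by case: m m2 => [|[]].
have m0 : m%:R != 0 :> R by rewrite pnatr_eq0; case: m m2.
by rewrite sub0r mulNr mulrCA mulfV // mulr1.
Qed.

Lemma offdiagonal_bound N :
  `|\sum_(1 <= n < N.+1) \sum_(1 <= k < N.+1 | ~~ (n * k <= N)%N) expo n * ((x ^+ n) ^+ k / k%:R)|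
  <= N%:R * (N%:R * (2 * x ^+ N.+1)).
Proof.
apply: norm_sum_le_const => n /andP[n1 _]; rewrite big_mkcond /=.
apply: norm_sum_le_const => k /andP[k1 _].
have c0 : 0 <= 2 * x ^+ N.+1 by rewrite mulr_ge0 // exprn_ge0 // ltW.
case: ifP => [nk_gt | _]; last by rewrite normr0.
rewrite normrM ler_pM ?expo_bound //.
rewrite normrM normfV normr_nat ger0_norm; last by rewrite -exprM exprn_ge0 // ltW.
rewrite ler_pdivrMr ?ltr0n // -exprM.
have nk : (N.+1 <= n * k)%N by rewrite ltnNge nk_gt.
apply: le_trans (expr_le_expr _ _ nk) _.
by rewrite ler_peMr ?ler1n // exprn_ge0 // ltW.
Qed.

(* Expanding every logarithm to order  N,  the logarithm of the partial product
   differs from  x^2 + ... + x^N  by the Taylor remainders and the terms with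
   n k > N. *)
Lemma log_partial_near_geom N :
  `|log_partial x N - \sum_(2 <= m < N.+1) x ^+ m|
  <= N%:R * (2 * (x ^+ N.+1 / (1 - x))) + N%:R * (N%:R * (2 * x ^+ N.+1)).
Proof.
pose Q n := \sum_(1 <= k < N.+1) (x ^+ n) ^+ k / k%:R.
pose A := \sum_(1 <= n < N.+1) expo n * (ln (1 - x ^+ n) + Q n).
pose O := \sum_(1 <= n < N.+1) \sum_(1 <= k < N.+1 | ~~ (n * k <= N)%N)
  expo n * ((x ^+ n) ^+ k / k%:R).
have -> : log_partial x N = A - (\sum_(1 <= n < N.+1)
    \sum_(1 <= k < N.+1 | (n * k <= N)%N) expo n * ((x ^+ n) ^+ k / k%:R) + O).
  rewrite /A /O -big_split -sumrB /=.
  apply: eq_bigr => n _; rewrite /Q mulrDr mulr_sumr (bigID (fun k => (n * k <= N)%N)) /=.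
  by ring.
have HA : `|A| <= N%:R * (2 * (x ^+ N.+1 / (1 - x))).
  apply: norm_sum_le_const => n /andP[n1 _].
  by rewrite normrM ler_pM ?expo_bound ?log_power_taylor.
rewrite diagonal_sum; apply: le_trans (lerD HA (offdiagonal_bound N)).
rewrite -/O (_ : A - (- _ + O) - _ = A - O); first exact: ler_normB.
by ring.
Qed.

Lemma geom_sum_from2 N : (0 < N)%N ->
  \sum_(2 <= m < N.+1) x ^+ m = (x ^+ 2 - x ^+ N.+1) / (1 - x).
Proof.
have x1 : 1 - x != 0 by rewrite subr_eq0 eq_sym lt_eqF.
elim: N => [// | [|N] IH _]; first by rewrite big_geq // subrr mul0r.
by rewrite big_nat_recr //= IH // [x ^+ N.+3]exprS; field.
Qed.

Lemma log_partial_bound N : (0 < N)%N ->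
  `|log_partial x N - x ^+ 2 / (1 - x)| <= (3 / (1 - x) + 2) * (N%:R ^+ 2 * x ^+ N).
Proof.
move=> N0; have near := log_partial_near_geom N; rewrite geom_sum_from2 // in near.
set w := (1 - x)^-1 in near *; set u := x ^+ N; set n := N%:R : R in near *.
have w0 : 0 < w by rewrite invr_gt0 subr_gt0.
have u0 : 0 <= u by rewrite exprn_ge0 // ltW.
have xu0 : 0 <= x * u by rewrite mulr_ge0 // ltW.
have xu : x * u <= u by rewrite ler_piMl // ltW.
have n1 : 1 <= n by rewrite ler1n.
have nn : n <= n ^+ 2 by rewrite expr2 ler_peMl // (le_trans ler01 n1).
rewrite [x ^+ N.+1]exprS -/u in near.
have -> : log_partial x N - x ^+ 2 * w =
  (log_partial x N - (x ^+ 2 - x * u) * w) - x * u * w by ring.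
apply: le_trans (ler_normB _ _) _.
rewrite [`|x * u * w|]ger0_norm; last by rewrite mulr_ge0 // ltW.
apply: le_trans (lerD near (lexx _)) _.
have h1 : n * (x * u * w) <= n ^+ 2 * (u * w).
  by apply: ler_pM; rewrite ?mulr_ge0 ?ler_wpM2r // ltW.
have h2 : n * (n * (x * u)) <= n ^+ 2 * u by rewrite mulrA -expr2 ler_wpM2l ?exprn_ge0.
have h3 : x * u * w <= n ^+ 2 * (u * w).
  apply: le_trans (ler_wpM2r (ltW w0) xu) _.
  by rewrite ler_peMl ?(le_trans n1 nn) // mulr_ge0 // ltW.
lra.
Qed.

End FixedRatio.
End Estimate.

Section Limit.
Local Open Scope ring_scope.

Lemma partial_prod_Rpower (b e : nat -> R) N :
  partial_prod (fun n => Rpower (b n) (e n)) N = exp (\sum_(1 <= n < N.+1) e n * ln (b n)).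
Proof.
elim: N => [|N IH] /=; first by rewrite big_geq ?exp_0.
by rewrite IH [in RHS]big_nat_recr //= -RplusE exp_plus.
Qed.

Lemma log_partial_cv x : 0 < x < 1 -> Un_cv (log_partial x) (x ^ 2 / (1 - x)).
Proof.
move=> /andP[x0 x1].
apply: (Un_cv_dominated _ _ _ (3 / (1 - x) + 2) (sq_geom_cv x (conj (RltP x0) (RltP x1)))).
move=> N N0; apply/RleP; rewrite RabsE !RminusE RdivE RmultE !RpowE INRE.
exact: log_partial_bound.
Qed.

End Limit.

Local Open Scope R_scope.

Theorem mainTheorem1 :
  Un_cv
    (partial_prod (fun n : nat =>
        Rpower (1 - / tau ^ n)
               ((IZR (moebius n) - INR (euler_phi n)) / INR n)))
    (exp 1).
Proof.
have [[x0 x1] golden] := golden_ratio_inverse.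
have x01 : (0 < / tau < 1)%R by apply/andP; split; apply/RltP.
have := continuity_seq exp _ _ (derivable_continuous_pt _ _ (derivable_pt_exp _)) (log_partial_cv _ x01).
rewrite golden => /is_lim_seq_Reals cv.
apply/is_lim_seq_Reals; apply: is_lim_seq_ext cv => N.
rewrite partial_prod_Rpower /log_partial; congr exp; apply: eq_bigr => n _.
by rewrite RminusE -pow_inv RpowE.
Qed.
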